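(* Assume $\langle f\rangle_X=0$ and that $\psi$ satisfies (A1) and (A2). Then a function $u^H\in U^H_\#$ solves the HQC problem if and only if \[ \langle\psi^0_{\rm coll}Du^H,Dv^H\rangle_X=\langle f,v^H\rangle_X\quad\text{for all }v^H\in U^H_\#, \] where $\psi^0_{\rm coll}(X_i)=\psi^0(X_{i_k^{\rm coll}})$ for $X_i\in S_k$.
   Context: Let $\epsilon>0$, $N,p$ positive integers with normalization $N\epsilon=1$; $X_i=\epsilon i$, $Y_j=j$. $U^N_{\rm per}(\epsilon\mathbb Z)$: functions $u:\epsilon\mathbb Z\to\mathbb R$ with $u(X_{i+N})=u(X_i)$; $U^N_\#(\epsilon\mathbb Z)$: those with $\langle u\rangle_X:=\frac1N\sum_{i=1}^Nu(X_i)=0$. $\langle u,v\rangle_X=\frac1N\sum_{i=1}^Nu(X_i)v(X_i)$, $Du(X_i)=(u(X_{i+1})-u(X_i))/\epsilon$. $U^p_\#(\epsilon\mathbb Z)$: $p$-periodic functions on $\epsilon\mathbb Z$ with $\sum_{i=1}^pw(X_i)=0$. Two-scale functions $g:\epsilon\mathbb Z\times\mathbb Z\to\mathbb R$ satisfy $g(X_{i+N},Y_j)=g(X_i,Y_j)=g(X_i,Y_{j+p})$; $D_Xg(X_i,Y_j)=(g(X_{i+1},Y_j)-g(X_i,Y_j))/\epsilon$, $\|g\|_{L^\infty(N,p)}=\max_{1\le i\le N,1\le j\le p}|g|$. $\psi$ is a two-scale function with (A1) $0<c_\psi\le\psi\le C_\psi$ and (A2) $\|D_X\psi\|_{L^\infty(N,p)}\le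 C'_\psi$; $\psi^0(X_i)=(\frac1p\sum_{j=1}^p1/\psi(X_i,Y_j))^{-1}$. $f\in U^N_{\rm per}(\epsilon\mathbb Z)$. HQC method: indices $1=i_1<\dots<i_K\le N$, $i_{K+1}=N+1$, $S_k=\{X_i:i_k\le i<i_{k+1}\}$, $H_k=\epsilon(i_{k+1}-i_k)$. $U^H_{\rm per}$: $v\in U^N_{\rm per}(\epsilon\mathbb Z)$ affine on each $\{X_i:i_k\le i\le i_{k+1}\}$; $U^H_\#=U^H_{\rm per}\cap U^N_\#(\epsilon\mathbb Z)$. Sampling domains $S_k^{\rm rep}=\{X_i:i_k^{\rm rep}\le i<i_k^{\rm rep}+p\}\subset S_k$, collocation indices with $X_{i_k^{\rm coll}}\in S_k^{\rm rep}$, $\psi^\epsilon_{{\rm coll},k}(X_i)=\psi(X_{i_k^{\rm coll}},X_i/\epsilon)$, $\langle a,b\rangle_{S_k^{\rm rep}}=\frac1p\sum_{X_i\in S_k^{\rm rep}}a(X_i)b(X_i)$. For $v^H\in U^H_{\rm per}$ let $\ell_k$ be the affine function on $\epsilon\mathbb Z$ equal to $v^H$ on $S_k$; $\mathcal R_k(v^H)=\ell_k+w$ with $w\in U^p_\#(\epsilon\mathbb Z)$ such that $\langle\psi^\epsilon_{{\rm coll},k}D(\ell_k+w),Ds\rangle_{S_k^{\rm rep}}=0$ for all $s\in U^p_\#(\epsilon\mathbb Z)$. HQC problem: $u^H\in U^H_\#$ with $\sum_{k=1}^KH_k\langle\psi^\epsilon_{{\rm coll},k}D\mathcal R_k(u^H),D\mathcal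 R_k(v^H)\rangle_{S_k^{\rm rep}}=\langle f,v^H\rangle_X$ for all $v^H\in U^H_\#$. *)

From HB Require Import structures.
From mathcomp Require Import all_boot all_order all_algebra.
From mathcomp Require Import reals.
From Stdlib Require Import ClassicalEpsilon.

Set Implicit Arguments.
Unset Strict Implicit.
Unset Printing Implicit Defensive.
Import Order.TTheory GRing.Theory Num.Theory.
Local Open Scope ring_scope.

(* Grid functions: u : int -> R, where  u i  stands for u(X_i), X_i = eps*i,
   and eps = 1/N (normalization N * eps = 1).
   Two-scale functions: g : int -> int -> R, g i j stands for g(X_i, Y_j). *)

Definition eps_of (R : realType) (N : nat) : R := (N%:R)^-1.

Definition periodic (R : realType) (N : nat) (u : int -> R) : Prop :=
  forall i : int, u (i + N%:Z) = u i.

Definition mean_X (R : realType) (N : nat) (u : int -> R) : R :=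
  (N%:R)^-1 * \sum_(1 <= i < N.+1) u i%:Z.

Definition inner_X (R : realType) (N : nat) (u v : int -> R) : R :=
  (N%:R)^-1 * \sum_(1 <= i < N.+1) u i%:Z * v i%:Z.

Definition U_per (R : realType) (N : nat) (u : int -> R) : Prop := periodic N u.
Definition U_sharp (R : realType) (N : nat) (u : int -> R) : Prop :=
  periodic N u /\ mean_X N u = 0.

Definition Dd (R : realType) (N : nat) (u : int -> R) : int -> R :=
  fun i => (u (i + 1) - u i) / eps_of R N.

Definition Up_sharp (R : realType) (p : nat) (w : int -> R) : Prop :=
  periodic p w /\ \sum_(1 <= i < p.+1) w i%:Z = 0.

Definition two_scale (R : realType) (N p : nat) (g : int -> int -> R) : Prop :=
  forall i j : int, g (i + N%:Z) j = g i j /\ g i (j + p%:Z) = g i j.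

Definition DX (R : realType) (N : nat) (g : int -> int -> R) : int -> int -> R :=
  fun i j => (g (i + 1) j - g i j) / eps_of R N.

Definition psi0 (R : realType) (p : nat) (psi : int -> int -> R) : int -> R :=
  fun i => ((p%:R)^-1 * \sum_(1 <= j < p.+1) (psi i j%:Z)^-1)^-1.

Definition hqc_indices (N K : nat) (idx : nat -> nat) : Prop :=
  [/\ (1 <= K)%N, idx 1%N = 1%N,
      (forall k, (1 <= k < K)%N -> (idx k < idx k.+1)%N),
      (idx K <= N)%N & idx K.+1 = N.+1].

Definition Hk (R : realType) (N : nat) (idx : nat -> nat) (k : nat) : R :=
  eps_of R N * (idx k.+1 - idx k)%N%:R.

Definition UH_per (R : realType) (N K : nat) (idx : nat -> nat) (v : int -> R) : Prop :=
  periodic N v /\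
  forall k, (1 <= k <= K)%N ->
    exists a b : R, forall i : int,
      ((idx k)%:Z <= i <= (idx k.+1)%:Z)%R -> v i = a + b * i%:~R.

Definition UH_sharp (R : realType) (N K : nat) (idx : nat -> nat) (v : int -> R) : Prop :=
  UH_per N K idx v /\ mean_X N v = 0.

(* sampling domains S_k^rep = {X_i : rep k <= i < rep k + p} subset of S_k *)
Definition rep_ok (p K : nat) (idx rep : nat -> nat) : Prop :=
  forall k, (1 <= k <= K)%N -> (idx k <= rep k)%N /\ (rep k + p <= idx k.+1)%N.

Definition coll_ok (p K : nat) (rep coll : nat -> nat) : Prop :=
  forall k, (1 <= k <= K)%N -> (rep k <= coll k < rep k + p)%N.

(* psi^eps_{coll,k}(X_i) = psi(X_{coll k}, X_i/eps) = psi(X_{coll k}, Y_i) *)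
Definition psi_coll (R : realType) (psi : int -> int -> R) (coll : nat -> nat)
  (k : nat) : int -> R := fun i => psi (coll k)%:Z i.

Definition inner_rep (R : realType) (p : nat) (rep : nat -> nat) (k : nat)
  (a b : int -> R) : R :=
  (p%:R)^-1 * \sum_(rep k <= i < rep k + p) a i%:Z * b i%:Z.

Definition ell (R : realType) (idx : nat -> nat) (k : nat) (v : int -> R) : int -> R :=
  fun i => v (idx k)%:Z
           + (v (idx k.+1)%:Z - v (idx k)%:Z) / ((idx k.+1)%:R - (idx k)%:R)
             * (i - (idx k)%:Z)%:~R.

Definition is_corrector (R : realType) (N p : nat) (psi : int -> int -> R)
  (rep coll : nat -> nat) (k : nat) (l w : int -> R) : Prop :=
  Up_sharp p w /\
  forall s : int -> R, Up_sharp p s ->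
    inner_rep p rep k (fun i => psi_coll psi coll k i * Dd N (fun j => l j + w j) i)
                      (Dd N s) = 0.

Definition corrector (R : realType) (N p : nat) (psi : int -> int -> R)
  (rep coll : nat -> nat) (k : nat) (l : int -> R) : int -> R :=
  epsilon (inhabits (fun _ : int => (0 : R)))
          (is_corrector N p psi rep coll k l).

Definition Rk (R : realType) (N p : nat) (psi : int -> int -> R)
  (idx rep coll : nat -> nat) (k : nat) (v : int -> R) : int -> R :=
  fun i => ell idx k v i + corrector N p psi rep coll k (ell idx k v) i.

Definition hqc_solves (R : realType) (N p K : nat) (idx rep coll : nat -> nat)
  (psi : int -> int -> R) (f u : int -> R) : Prop :=
  forall v : int -> R, UH_sharp N K idx v ->
    \sum_(1 <= k < K.+1)
       Hk R N idx k *
       inner_rep p rep k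
         (fun i => psi_coll psi coll k i * Dd N (Rk N p psi idx rep coll k u) i)
         (Dd N (Rk N p psi idx rep coll k v))
    = inner_X N f v.

Definition psi0_coll (R : realType) (p K : nat) (idx coll : nat -> nat)
  (psi : int -> int -> R) : int -> R :=
  fun i => \sum_(1 <= k < K.+1)
            (if ((idx k)%:Z <= i < (idx k.+1)%:Z)%R
             then psi0 p psi (coll k)%:Z else 0).

From HB Require Import structures.
From mathcomp Require Import all_boot all_order all_algebra.
From mathcomp Require Import reals.
From mathcomp Require Import ring zify.
From Stdlib Require Import ClassicalEpsilon.
Set Implicit Arguments.
Unset Strict Implicit.
Unset Printing Implicit Defensive.
Import Order.TTheory GRing.Theory Num.Theory.
Local Open Scope ring_scope.

(* On a sampling domain, the cell problem for an affine function of slope [b]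
   is solved by the corrector that makes the flux [psi D(l + w)] constant: [w]
   is the periodic primitive of [b (psi^0 / psi - 1)], which has zero mean
   exactly because [psi^0] is the harmonic mean of [psi (X_coll, .)].  Since
   [psi > 0], an energy argument shows that every corrector produces this same
   flux [N b psi^0].  So the k-th term of the HQC form is
   [H_k N^2 s_u s_v psi^0(X_coll)], and as [u^H], [v^H] have constant
   differences [s_u], [s_v] on [S_k] this is the contribution of [S_k] to
   [<psi^0_coll D u^H, D v^H>_X]. *)

Section PeriodicSums.
Variables (V : zmodType) (p : nat) (F : int -> V).
Hypothesis F_per : forall j, F (j + p%:Z) = F j.

Lemma periodicMz (d j : int) : F (j + d * p%:Z) = F j.
Proof.
have F_perMn (n : nat) (i : int) : F (i + n%:Z * p%:Z) = F i.
  elim: n i => [|n IHn] i; first by rewrite mul0r addr0.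
  by rewrite -addn1 PoszD mulrDl mul1r addrA F_per IHn.
case: d => n; first exact: F_perMn.
by rewrite NegzE mulNr -[in RHS](subrK (n.+1%:Z * p%:Z) j) F_perMn.
Qed.

Lemma sum_window_periodic (r : nat) :
  \sum_(r <= i < (r + p)%N) F i%:Z = \sum_(1 <= i < p.+1) F i%:Z.
Proof.
suff sum_window0 m : \sum_(m <= i < (m + p)%N) F i%:Z = \sum_(0 <= i < p) F i%:Z.
  by rewrite sum_window0 -(sum_window0 1) add1n.
elim: m => [//|m IHm]; rewrite -IHm.
case: p F_per => [|q] Fq_per; first by rewrite !big_geq ?addn0.
rewrite [in RHS]big_ltn ?addnS ?ltnS ?leq_addr // addSn big_nat_recr ?leq_addr //=.
by rewrite addrC -addnS PoszD Fq_per.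
Qed.

Lemma sum_window_diff (r : nat) :
  \sum_(r <= i < (r + p)%N) (F (i%:Z + 1) - F i%:Z) = 0.
Proof.
under eq_bigr => i _ do rewrite -[1]/(1%N : int) -PoszD addn1.
by rewrite (telescope_sumr (fun i => F i%:Z)) ?leq_addr // PoszD F_per subrr.
Qed.

End PeriodicSums.

Lemma periodic_primitive (R : numFieldType) (p : nat) (a : int -> R) :
  (0 < p)%N -> (forall j, a (j + p%:Z) = a j) -> \sum_(1 <= i < p.+1) a i%:Z = 0 ->
  exists w : int -> R, [/\ forall j, w (j + p%:Z) = w j,
    \sum_(1 <= i < p.+1) w i%:Z = 0 & forall i, w (i + 1) - w i = a i].
Proof.
move=> p_gt0 a_per a_sum0.
pose h (i : int) := \sum_(0 <= j < `|(i %% p%:Z)%Z|%N) a j%:Z.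
have h_per j : h (j + p%:Z) = h j by rewrite /h modzDr.
have h_diff i : h (i + 1) - h i = a i.
  have [m i_mod] : exists m : nat, (i %% p%:Z)%Z = m%:Z.
    by exists `|(i %% p%:Z)%Z|%N; rewrite gez0_abs // modz_ge0 // eqz_nat -lt0n.
  have m_lt_p : (m < p)%N by rewrite -ltz_nat -i_mod ltz_pmod.
  have i_eq : i = (i %/ p%:Z)%Z * p%:Z + m%:Z by rewrite -i_mod -divz_eq.
  have -> : a i = a m%:Z by rewrite i_eq addrC periodicMz.
  have i1_mod : ((i + 1) %% p%:Z)%Z = (m.+1 %% p)%N%:Z.
    by rewrite i_eq -addrA modzMDl -modz_nat -addn1 PoszD.
  rewrite /h i_mod i1_mod /=; have [m1_lt_p | ] := ltnP m.+1 p.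
    by rewrite modn_small // big_nat_recr //= addrAC subrr add0r.
  (* wrap-around: the jump of [h] is [- \sum_(j < p - 1) a j], i.e. [a (p - 1)] *)
  rewrite leq_eqVlt ltnNge m_lt_p orbF => /eqP m1_eq_p.
  move: a_sum0; rewrite -(sum_window_periodic a_per 0) add0n m1_eq_p big_nat_recr //=.
  rewrite modnn [X in X - _]big_geq // sub0r => /eqP.
  by rewrite addr_eq0 => /eqP ->; rewrite opprK.
pose c := (p%:R)^-1 * \sum_(1 <= i < p.+1) h i%:Z.
exists (fun i => h i - c); split=> [j | | i].
- by rewrite h_per.
- rewrite sumrB sumr_const_nat subSS subn0 /c -[X in _ - X]mulr_natr mulrAC.
  by rewrite mulVf ?mul1r ?subrr // pnatr_eq0 -lt0n.
- by rewrite opprB addrA subrK h_diff.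
Qed.

Lemma DdE (R : realType) (N : nat) (g : int -> R) (i : int) :
  Dd N g i = N%:R * (g (i + 1) - g i).
Proof. by rewrite /Dd /eps_of invrK mulrC. Qed.

Definition slope (R : realType) (idx : nat -> nat) (k : nat) (v : int -> R) : R :=
  (v (idx k.+1)%:Z - v (idx k)%:Z) / ((idx k.+1)%:R - (idx k)%:R).

Lemma ell_diff (R : realType) (idx : nat -> nat) (k : nat) (v : int -> R) (i : int) :
  ell idx k v (i + 1) - ell idx k v i = slope idx k v.
Proof. by rewrite /ell /slope !intrB intrD; ring. Qed.

Section CellProblem.
Variables (R : realType) (N p : nat) (psi : int -> int -> R) (rep coll : nat -> nat).
Variable k : nat.
Hypotheses (p_gt0 : (0 < p)%N) (psi_per : forall i j, psi i (j + p%:Z) = psi i j).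
Hypothesis psi_gt0 : forall i j, 0 < psi i j.

Let psik := psi_coll psi coll k.
Let psi0k := psi0 p psi (coll k)%:Z.

Lemma psi0_mul_sum_inv (c : int) :
  psi0 p psi c * \sum_(1 <= j < p.+1) (psi c j%:Z)^-1 = p%:R.
Proof.
have sum_gt0 : 0 < \sum_(1 <= j < p.+1) (psi c j%:Z)^-1.
  rewrite big_nat_recl // ltr_pwDl ?invr_gt0 //.
  by apply: sumr_ge0 => j _; rewrite invr_ge0 ltW.
by rewrite /psi0 invfM invrK mulfVK // gt_eqF.
Qed.

Lemma sum_rep_eq0 (a b : int -> R) : inner_rep p rep k a b = 0 ->
  \sum_(rep k <= i < rep k + p) a i%:Z * b i%:Z = 0.
Proof. by move/eqP; rewrite mulf_eq0 invr_eq0 pnatr_eq0 gtn_eqF // => /eqP. Qed.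

Lemma corrector_Dd_unique (l w1 w2 : int -> R) :
  is_corrector N p psi rep coll k l w1 -> is_corrector N p psi rep coll k l w2 ->
  forall i : nat, (rep k <= i < rep k + p)%N ->
  Dd N (fun j => l j + w1 j) i%:Z = Dd N (fun j => l j + w2 j) i%:Z.
Proof.
move=> [[w1_per w1_sum0] w1_orth] [[w2_per w2_sum0] w2_orth] i i_in.
pose s j := w1 j - w2 j.
have s_test : Up_sharp p s.
  by split=> [j|]; rewrite /s ?w1_per ?w2_per // sumrB w1_sum0 w2_sum0 subrr.
have energy0 : \sum_(rep k <= j < rep k + p) psik j%:Z * Dd N s j%:Z ^+ 2 = 0.
  move: (congr2 (fun x y => x - y) (sum_rep_eq0 (w1_orth s s_test))
                                  (sum_rep_eq0 (w2_orth s s_test))).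
  rewrite subrr -sumrB; apply: etrans; apply: eq_bigr => j _.
  by rewrite /psik !DdE /s; ring.
have term_ge0 j : predT j -> 0 <= psik j%:Z * Dd N s j%:Z ^+ 2.
  by move=> _; rewrite mulr_ge0 ?sqr_ge0 // (ltW (psi_gt0 _ _)).
move: (psumr_eq0 (index_iota (rep k) (rep k + p)) term_ge0).
rewrite energy0 eqxx => /esym/allP/(_ i); rewrite mem_index_iota i_in => /(_ isT).
rewrite /= /psik /psi_coll mulf_eq0 gt_eqF // sqrf_eq0 !DdE /s => /eqP Ds0.
by apply/eqP; rewrite -subr_eq0 -[X in _ == X]Ds0; apply/eqP; ring.
Qed.

Lemma constant_flux_corrector (l : int -> R) (b : R) :
  (forall i, l (i + 1) - l i = b) ->
  exists w, is_corrector N p psi rep coll k l w /\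
    forall i, psik i * Dd N (fun j => l j + w j) i = N%:R * b * psi0k.
Proof.
move=> l_diff; set c := (coll k)%:Z.
pose a j := b * psi0k / psi c j - b.
have a_per j : a (j + p%:Z) = a j by rewrite /a psi_per.
have a_sum0 : \sum_(1 <= j < p.+1) a j%:Z = 0.
  rewrite sumrB sumr_const_nat subSS subn0 -mulr_sumr -mulrA psi0_mul_sum_inv.
  by rewrite mulr_natr subrr.
have [w [w_per w_sum0 w_diff]] := periodic_primitive p_gt0 a_per a_sum0.
have flux i : psik i * Dd N (fun j => l j + w j) i = N%:R * b * psi0k.
  rewrite DdE opprD addrACA l_diff w_diff /a /psik /psi_coll -/c.
  by field; rewrite gt_eqF.
exists w; split=> //; split=> // s [s_per _].
rewrite /inner_rep (eq_bigr (fun i => N%:R * b * psi0k * Dd N s i%:Z)) => [|i _].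
  rewrite -mulr_sumr (eq_bigr _ (fun i _ => DdE _ _ _)) -mulr_sumr.
  by rewrite sum_window_diff // !mulr0.
by rewrite flux.
Qed.

Lemma corrector_flux (l : int -> R) (b : R) :
  (forall i, l (i + 1) - l i = b) ->
  forall i : nat, (rep k <= i < rep k + p)%N ->
  psik i%:Z * Dd N (fun j => l j + corrector N p psi rep coll k l j) i%:Z
  = N%:R * b * psi0k.
Proof.
move=> l_diff i i_in.
have [w [w_corr w_flux]] := constant_flux_corrector l_diff.
have corr : is_corrector N p psi rep coll k l (corrector N p psi rep coll k l).
  by apply: epsilon_spec; exists w.
by rewrite (corrector_Dd_unique corr w_corr i_in) w_flux.
Qed.

Lemma cell_form (idx : nat -> nat) (u v : int -> R) :
  inner_rep p rep k (fun i => psik i * Dd N (Rk N p psi idx rep coll k u) i)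
                    (Dd N (Rk N p psi idx rep coll k v))
  = N%:R ^+ 2 * slope idx k u * slope idx k v * psi0k.
Proof.
have flux_u := corrector_flux (ell_diff idx k u).
have flux_v := corrector_flux (ell_diff idx k v).
rewrite /inner_rep (eq_big_nat _ _ (F2 := fun i =>
  N%:R * slope idx k u * psi0k * (N%:R * slope idx k v * psi0k) * (psi (coll k) i%:Z)^-1)).
  have inv_per j : (psi (coll k)%:Z (j + p%:Z))^-1 = (psi (coll k)%:Z j)^-1.
    by rewrite psi_per.
  rewrite -mulr_sumr (sum_window_periodic inv_per).
  have q_S := psi0_mul_sum_inv (coll k)%:Z.
  set S := \sum_(_ <= _ < _) _ in q_S *.
  rewrite -/psi0k in q_S *.
  have -> : N%:R * slope idx k u * psi0k * (N%:R * slope idx k v * psi0k) * S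
          = N%:R ^+ 2 * slope idx k u * slope idx k v * psi0k * (psi0k * S) by ring.
  by rewrite q_S mulrC mulfK ?pnatr_eq0 ?gtn_eqF.
move=> i i_in; rewrite flux_u // -(flux_v i i_in) /psik /psi_coll.
by field; rewrite gt_eqF.
Qed.

End CellProblem.

Section MacroGrid.
Variables (N K : nat) (idx : nat -> nat).
Hypothesis idx_ok : hqc_indices N K idx.

Lemma idx_lt_succ k : (1 <= k <= K)%N -> (idx k < idx k.+1)%N.
Proof.
case: idx_ok => _ _ idx_incr idx_K idx_last /andP[k_ge1 k_leK].
have [k_ltK | k_geK] := ltnP k K; first by rewrite idx_incr ?k_ge1.
have -> : k = K by apply/eqP; rewrite eqn_leq k_leK k_geK.
by rewrite idx_last ltnS.
Qed.

Lemma idx_homo k1 k2 : (1 <= k1)%N -> (k1 <= k2 <= K.+1)%N -> (idx k1 <= idx k2)%N.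
Proof.
move=> k1_ge1; elim: k2 => [|k2 IHk2]; first by rewrite leqn0 => /andP[/eqP->].
move=> /andP[]; rewrite leq_eqVlt => /orP[/eqP<- // | k1_le_k2 k2_lt_K].
apply: leq_trans (IHk2 _) (ltnW (idx_lt_succ _)); apply/andP; lia.
Qed.

Lemma sum_cells (V : zmodType) (F : nat -> V) :
  \sum_(1 <= i < N.+1) F i = \sum_(1 <= k < K.+1) \sum_(idx k <= i < idx k.+1) F i.
Proof.
have [_ idx_first _ _ idx_last] := idx_ok.
suff split_upto m : (m <= K)%N ->
    \sum_(idx 1 <= i < idx m.+1) F i
    = \sum_(1 <= k < m.+1) \sum_(idx k <= i < idx k.+1) F i.
  by rewrite -split_upto // idx_first idx_last.
elim: m => [|m IHm] m_lt_K; first by rewrite !big_geq.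
have le_first : (idx 1 <= idx m.+1)%N by apply: idx_homo; lia.
have le_next : (idx m.+1 <= idx m.+2)%N by apply/ltnW/idx_lt_succ; lia.
rewrite (@big_cat_nat _ _ _ (idx m.+1)) // IHm; last lia.
by rewrite [RHS]big_nat_recr.
Qed.

Lemma psi0_coll_cell (R : realType) (p : nat) (coll : nat -> nat)
    (psi : int -> int -> R) k (i : nat) :
  (1 <= k <= K)%N -> (idx k <= i < idx k.+1)%N ->
  psi0_coll p K idx coll psi i%:Z = psi0 p psi (coll k)%:Z.
Proof.
move=> /andP[k_ge1 k_leK] /andP[i_ge i_lt].
rewrite /psi0_coll (bigD1_seq k) ?iota_uniq ?mem_index_iota ?k_ge1 ?ltnS //=.
rewrite lez_nat ltz_nat i_ge i_lt big1_seq ?addr0 // => k' /andP[k'_neq].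
rewrite mem_index_iota lez_nat ltz_nat => /andP[k'_ge1 k'_leK].
have [k'_lt_k | k_le_k'] := ltnP k' k.
  have idx_le : (idx k'.+1 <= idx k)%N by apply: idx_homo; lia.
  by rewrite ltnNge (leq_trans idx_le i_ge) andbF.
have idx_le : (idx k.+1 <= idx k')%N by apply: idx_homo; lia.
by rewrite leqNgt (leq_trans i_lt idx_le).
Qed.

Lemma UH_per_diff (R : realType) (v : int -> R) k (i : nat) :
  UH_per N K idx v -> (1 <= k <= K)%N -> (idx k <= i < idx k.+1)%N ->
  v (i%:Z + 1) - v i%:Z = slope idx k v.
Proof.
move=> [_ v_aff] k_in /andP[i_ge i_lt].
have [a [b v_eq]] := v_aff k k_in.
have idx_lt := idx_lt_succ k_in.
have v_cell (j : nat) : (idx k <= j <= idx k.+1)%N -> v j%:Z = a + b * j%:R.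
  by move=> j_in; rewrite v_eq // !lez_nat.
have -> : i%:Z + 1 = i.+1%:Z by rewrite -addn1 PoszD.
rewrite /slope !v_cell; try lia.
rewrite -addn1 natrD; field.
by rewrite subr_eq0 eqr_nat gtn_eqF.
Qed.

Lemma hqc_form_E (R : realType) (p : nat) (rep coll : nat -> nat)
    (psi : int -> int -> R) (u v : int -> R) :
  (0 < p)%N -> (forall i j, psi i (j + p%:Z) = psi i j) ->
  (forall i j, 0 < psi i j) -> UH_per N K idx u -> UH_per N K idx v ->
  \sum_(1 <= k < K.+1) Hk R N idx k *
     inner_rep p rep k
       (fun i => psi_coll psi coll k i * Dd N (Rk N p psi idx rep coll k u) i)
       (Dd N (Rk N p psi idx rep coll k v))
  = inner_X N (fun i => psi0_coll p K idx coll psi i * Dd N u i) (Dd N v).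
Proof.
move=> p_gt0 psi_per psi_gt0 u_aff v_aff.
rewrite /inner_X sum_cells mulr_sumr; apply: eq_big_nat => k k_range.
have k_in : (1 <= k <= K)%N by rewrite -ltnS.
rewrite cell_form // (eq_big_nat _ _ (F2 := fun=> psi0 p psi (coll k)%:Z
                  * (N%:R * slope idx k u) * (N%:R * slope idx k v))) => [|i i_in].
  by rewrite sumr_const_nat /Hk /eps_of -mulr_natr; ring.
by rewrite (psi0_coll_cell _ _ _ k_in i_in) !DdE !(UH_per_diff _ k_in i_in).
Qed.

End MacroGrid.

Theorem lemma6p6 (R : realType) (N p K : nat) (idx rep coll : nat -> nat)
  (psi : int -> int -> R) (f : int -> R) (c_psi C_psi C'_psi : R) (u : int -> R) :
  (0 < N)%N -> (0 < p)%N ->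
  hqc_indices N K idx -> rep_ok p K idx rep -> coll_ok p K rep coll ->
  two_scale N p psi ->
  (* (A1) *)
  0 < c_psi -> (forall i j : int, c_psi <= psi i j <= C_psi) ->
  (* (A2) *)
  (forall i j : nat, (1 <= i <= N)%N -> (1 <= j <= p)%N ->
     `|DX N psi i%:Z j%:Z| <= C'_psi) ->
  U_per N f -> mean_X N f = 0 ->
  UH_sharp N K idx u ->
  (hqc_solves N p K idx rep coll psi f u <->
   forall v : int -> R, UH_sharp N K idx v ->
     inner_X N (fun i => psi0_coll p K idx coll psi i * Dd N u i) (Dd N v)
     = inner_X N f v).
Proof.
move=> _ p_gt0 idx_ok _ _ psi_2scale c_psi_gt0 psi_bounds _ _ _ [u_aff _].
have psi_per i j : psi i (j + p%:Z) = psi i j by case: (psi_2scale i j).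
have psi_gt0 i j : 0 < psi i j.
  by case/andP: (psi_bounds i j) => /(lt_le_trans c_psi_gt0).
have form_E v := @hqc_form_E N K idx idx_ok R p rep coll psi u v p_gt0 psi_per psi_gt0 u_aff.
split=> solves v [v_aff v_mean].
- by rewrite -form_E //; apply: solves.
- by rewrite /hqc_solves form_E //; apply: solves.
Qed.
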